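(* Let $P$ be a bounded poset of finite length and $I\subset P$ a proper ideal. Then: (i) $P$ and $\mathrm{Bier}(P,I)$ have the same length $n$. (ii) $\mathrm{Bier}(P,I)$ is graded if and only if $P$ is graded; in that case the rank of an element $[x,y]\neq\hat1$ of $\mathrm{Bier}(P,I)$ is $\mathrm{rank}_P(x)+(n-\mathrm{rank}_P(y))$. (iii) For $[x,y]\in\mathrm{Bier}(P,I)$ one has $[[x,y],\hat1]\cong \mathrm{Bier}([x,y],I\cap[x,y])$, and for $[x',y']\le[x,y]$ in $\mathrm{Bier}(P,I)$ (i.e. $x'\le x<y\le y'$) one has $[[x',y'],[x,y]]\cong [x',x]\times[y,y']^{\mathrm{op}}$, where $[y,y']^{\mathrm{op}}$ is the interval $[y,y']$ of $P$ with the opposite order. (iv) If $P$ is a lattice, then $\mathrm{Bier}(P,I)$ is a lattice.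
   Context: All posets have finite length. A poset is bounded if it has a unique minimum $\hat0$ and maximum $\hat1$; it is graded if it is bounded and all maximal chains have the same length. An ideal of $P$ is a subset $I$ with $x\le y$, $y\in I$ implying $x\in I$; it is proper if $I\neq\emptyset$ and $I\neq P$ (so $\hat0\in I$, $\hat1\notin I$). For a bounded poset $P$ of finite length and a proper ideal $I$, the Bier poset $\mathrm{Bier}(P,I)$ consists of all intervals $[x,y]=\{z\in P: x\le z\le y\}$ of $P$ with $x\in I$ and $y\notin I$, ordered by reversed inclusion ($[x',y']\le[x,y]$ iff $x'\le x<y\le y'$), together with an additional top element $\hat1$. Its minimum is $[\hat0,\hat1]$. *)

(* Posets are handled "relationally": a poset is a carrier
   subset S : A -> Prop of a type A with an order relation le : A -> A -> Prop.
   This lets us treat P, its intervals, opposite orders, products, and the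
   Bier poset uniformly. *)
From HB Require Import structures.
From mathcomp Require Import all_boot all_order.
Set Implicit Arguments. Unset Strict Implicit. Unset Printing Implicit Defensive.
Import Order.TTheory.

Section RelPoset.
Variables (A : Type) (S : A -> Prop) (le : A -> A -> Prop).

Fixpoint inseq (z : A) (s : seq A) : Prop :=
  match s with [::] => False | y :: s' => z = y \/ inseq z s' end.

(* x :: s is a strictly increasing chain of elements of S (x itself in S
   is required separately); its length is size s. *)
Fixpoint chain_from (x : A) (s : seq A) : Prop :=
  match s with
  | [::] => True
  | y :: s' => [/\ le x y, x <> y, S y & chain_from y s']
  end.

Definition is_chain (x : A) (s : seq A) : Prop := S x /\ chain_from x s.

Definition finite_length : Prop :=
  exists n, forall x s, is_chain x s -> size s <= n.

Definition has_length (n : nat) : Prop :=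
  (exists x s, is_chain x s /\ size s = n) /\
  (forall x s, is_chain x s -> size s <= n).

Definition maximal_chain (x : A) (s : seq A) : Prop :=
  is_chain x s /\
  forall y t, is_chain y t ->
    (forall z, inseq z (x :: s) -> inseq z (y :: t)) ->
    (forall z, inseq z (y :: t) -> inseq z (x :: s)).

Definition bounded : Prop :=
  (exists b, S b /\ forall z, S z -> le b z) /\
  (exists t, S t /\ forall z, S z -> le z t).

Definition graded : Prop :=
  bounded /\
  forall x s y t, maximal_chain x s -> maximal_chain y t -> size s = size t.


Definition itv (a b : A) : A -> Prop := fun z => [/\ S z, le a z & le z b].

Definition is_lub (a b j : A) : Prop :=
  [/\ S j, le a j, le b j & forall u, S u -> le a u -> le b u -> le j u].
Definition is_glb (a b m : A) : Prop :=
  [/\ S m, le m a, le m b & forall u, S u -> le u a -> le u b -> le u m].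

Definition is_lattice : Prop :=
  forall a b, S a -> S b -> (exists j, is_lub a b j) /\ (exists m, is_glb a b m).

Definition is_ideal (I : A -> Prop) : Prop :=
  (forall z, S z -> I z -> S z) /\
  forall u v, S u -> S v -> le u v -> I v -> I u.
Definition proper_ideal (I : A -> Prop) : Prop :=
  (forall z, I z -> S z) /\ is_ideal I /\
  (exists z, S z /\ I z) /\ (exists z, S z /\ ~ I z).

(* Bier poset: intervals [x,y] (encoded as Some (x,y)) with x in I, y not in I,
   plus the extra top element None. *)
Definition BierS (I : A -> Prop) (o : option (A * A)) : Prop :=
  match o with
  | None => True
  | Some (x, y) => [/\ S x, S y, le x y, I x & ~ I y]
  end.

Definition BierLe (o1 o2 : option (A * A)) : Prop :=
  match o1, o2 with
  | _, None => True
  | None, Some _ => False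
  | Some (x', y'), Some (x, y) =>
      forall z, itv x y z -> itv x' y' z
  end.

End RelPoset.

Definition rank_is (A : Type) (S : A -> Prop) (le : A -> A -> Prop) (z : A) (r : nat) : Prop :=
  has_length (fun w => S w /\ le w z) le r.

Definition poset_iso (A B : Type) (S1 : A -> Prop) (le1 : A -> A -> Prop)
    (S2 : B -> Prop) (le2 : B -> B -> Prop) : Prop :=
  exists (f : A -> B) (g : B -> A),
    [/\ forall a, S1 a -> S2 (f a),
        forall b, S2 b -> S1 (g b),
        forall a, S1 a -> g (f a) = a,
        forall b, S2 b -> f (g b) = b &
        forall a a', S1 a -> S1 a' -> (le1 a a' <-> le2 (f a) (f a'))].

Definition PT (d : Order.disp_t) (T : tbPOrderType d) : T -> Prop := fun _ => True.
Definition PLe (d : Order.disp_t) (T : tbPOrderType d) : T -> T -> Prop :=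
  fun a b => (a <= b)%O.

Definition prodS (d : Order.disp_t) (T : tbPOrderType d) (x' x y y' : T)
  : T * T -> Prop :=
  fun p => itv (@PT d T) (@PLe d T) x' x p.1 /\ itv (@PT d T) (@PLe d T) y y' p.2.
Definition prodOpLe (d : Order.disp_t) (T : tbPOrderType d) (p q : T * T) : Prop :=
  (p.1 <= q.1)%O /\ (q.2 <= p.2)%O.

(* A cover [a, b] < [c, d] in Bier(P, I) moves exactly one endpoint, by a cover
   of P.  Cutting a maximal chain 0 = p_0 < ... < p_n = 1 of P at the boundary
   of I (p_k in I, p_(k+1) not in I) gives the maximal chain
   [p_0, 1] < [p_1, 1] < ... < [p_k, 1] < [p_k, p_(n-1)] < ... < [p_k, p_(k+1)] < 1
   of Bier(P, I) of the same length; conversely the endpoints of a maximal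
   chain of Bier(P, I) interleave into a maximal chain of P.  More generally
   the two endpoint sequences of any chain of intervals merge into a chain of P
   at least as long, which bounds lengths and ranks. *)
From mathcomp Require Import all_boot all_order zify.
From Stdlib Require Import Classical.
Set Implicit Arguments. Unset Strict Implicit. Unset Printing Implicit Defensive.
Import Order.TTheory.

Lemma ex_max_nat (P : nat -> Prop) N : P 0 -> (forall k, P k -> k <= N) ->
  exists n, P n /\ forall k, P k -> k <= n.
Proof.
move=> P0; elim: N => [|N IH] Pb; first by exists 0.
case: (classic (P N.+1)) => PN; first by exists N.+1.
apply: IH => k Pk; have := Pb k Pk; rewrite leq_eqVlt => /orP[/eqP Ek|//].
by rewrite Ek in Pk.
Qed.

Lemma inseq_cat A (w : A) s1 s2 : inseq w (s1 ++ s2) <-> inseq w s1 \/ inseq w s2.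
Proof. elim: s1 => [|y s IH] /=; [tauto | rewrite IH; tauto]. Qed.

Lemma chain_from_sub A (S S' : A -> Prop) rl x s : chain_from S rl x s ->
  (forall w, inseq w s -> S' w) -> chain_from S' rl x s.
Proof.
elim: s x => //= y s IH x [le_xy ne_xy Sy cs] S's; split => //; first by apply: S's; left.
by apply: IH => // w ws; apply: S's; right.
Qed.

Lemma finite_length_has_length A (S : A -> Prop) rl x :
  finite_length S rl -> S x -> exists n, has_length S rl n.
Proof.
case=> N bound Sx.
have P0 : exists y s, is_chain S rl y s /\ size s = 0 by exists x, [::].
have [n [[y [s [cs <-]]] max_n]] :
    exists n, (exists y s, is_chain S rl y s /\ size s = n) /\
              forall k, (exists y s, is_chain S rl y s /\ size s = k) -> k <= n.
  by apply: ex_max_nat P0 _ => k [y [s [cs <-]]]; exact: bound cs.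
by exists (size s); split => [|z t ct]; [exists y, s | apply: max_n; exists z, t].
Qed.

Section Chains.
Variables (A : Type) (S : A -> Prop) (rl : A -> A -> Prop).
Hypothesis rl_trans : forall x y z, rl x y -> rl y z -> rl x z.
Hypothesis rl_refl : forall x, S x -> rl x x.

Definition covers (a b : A) : Prop :=
  [/\ rl a b, a <> b, S b & forall z, S z -> rl a z -> rl z b -> z = a \/ z = b].

Fixpoint cover_chain (x : A) (s : seq A) : Prop :=
  match s with [::] => True | y :: s' => covers x y /\ cover_chain y s' end.

Lemma cover_chain_chain x s : cover_chain x s -> chain_from S rl x s.
Proof. by elim: s x => //= y s IH x [[le_xy ne_xy Sy _] /IH]. Qed.

Lemma chain_from_cat x s1 s2 : chain_from S rl x (s1 ++ s2) <->
  chain_from S rl x s1 /\ chain_from S rl (last x s1) s2.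
Proof.
elim: s1 x => [|y s1 IH] x /=; first by split => [|[]].
have := IH y; split => [[? ? ? /H[]]|[[? ? ? ?] ?]]; split => //; exact/H.
Qed.

Lemma cover_chain_cat x s1 s2 :
  cover_chain x (s1 ++ s2) <-> cover_chain x s1 /\ cover_chain (last x s1) s2.
Proof. elim: s1 x => [|y s1 IH] x /=; [tauto | rewrite IH; tauto]. Qed.

Lemma chain_from_rcons x s z : chain_from S rl x (rcons s z) <->
  chain_from S rl x s /\ [/\ rl (last x s) z, last x s <> z & S z].
Proof. by rewrite -cats1 chain_from_cat /=; split => [[? []]|[? []]]. Qed.

Lemma cover_chain_rcons x s z :
  cover_chain x (rcons s z) <-> cover_chain x s /\ covers (last x s) z.
Proof. rewrite -cats1 cover_chain_cat /=; tauto. Qed.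

Lemma chain_head_le x s w : chain_from S rl x s -> inseq w s -> rl x w.
Proof.
elim: s x => //= y s IH x [le_xy _ _ cs] [->//|ws].
exact: rl_trans le_xy (IH y cs ws).
Qed.

Lemma chain_memS x s w : chain_from S rl x s -> inseq w s -> S w.
Proof. by elim: s x => //= y s IH x [_ _ Sy cs] [->//|/(IH y cs)]. Qed.

Lemma chain_lastS x s : S x -> chain_from S rl x s -> S (last x s).
Proof. by elim: s x => //= y s IH x _ [_ _ Sy /(IH y Sy)]. Qed.

Lemma chain_le_last x s w :
  S x -> chain_from S rl x s -> inseq w (x :: s) -> rl w (last x s).
Proof.
elim: s x w => [|y s IH] x w Sx /=; first by move=> _ [->|[]]; exact: rl_refl.
move=> [le_xy _ Sy cs] [->|ws]; last exact: IH.
exact: rl_trans le_xy (IH y y Sy cs (or_introl erefl)).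
Qed.

Lemma chain_comparable x s u v : S x -> chain_from S rl x s ->
  inseq u (x :: s) -> inseq v (x :: s) -> rl u v \/ rl v u.
Proof.
elim: s x => [|y s IH] x Sx /=; first by move=> _ [->|[]] [->|[]]; left; exact: rl_refl.
move=> cxs; have [_ _ Sy cs] := cxs.
move=> [->|us] [->|vs].
- by left; exact: rl_refl.
- by left; exact: (@chain_head_le x (y :: s) v cxs vs).
- by right; exact: (@chain_head_le x (y :: s) u cxs us).
- exact: IH Sy cs us vs.
Qed.

Lemma chain_extend_last x c q : chain_from S rl x c -> S q -> rl (last x c) q ->
  exists c1, [/\ chain_from S rl x c1, last x c1 = q, size c <= size c1 &
                 last x c <> q -> size c < size c1].
Proof.
move=> cs Sq le_q; case: (classic (last x c = q)) => [<-|ne_q].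
  by exists c; split => // [][].
exists (rcons c q); rewrite last_rcons size_rcons; split => //.
by apply/chain_from_rcons; split => //; split.
Qed.

Lemma chain_extend_head b c r : chain_from S rl b c -> S b -> rl r b ->
  exists c1, [/\ chain_from S rl r c1, size c <= size c1 & r <> b -> size c < size c1].
Proof.
move=> cs Sb le_rb; case: (classic (r = b)) => [->|ne_rb].
  by exists c; split => // [][].
by exists (b :: c); split => //; split.
Qed.

Lemma refine_chain x s : chain_from S rl x s -> ~ cover_chain x s ->
  exists s', [/\ chain_from S rl x s', size s' = (size s).+1 & last x s' = last x s].
Proof.
elim: s x => [|y s IH] x /= cs not_cover; first by case: not_cover.
case: cs => le_xy ne_xy Sy cs.
case: (classic (covers x y)) => [cov_xy|not_cov].
  have [s' [cs' <- <-]] := IH y cs (fun c => not_cover (conj cov_xy c)).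
  by exists (y :: s').
have [z [Sz le_xz le_zy ne_zx ne_zy]] :
    exists z, [/\ S z, rl x z, rl z y, z <> x & z <> y].
  apply: NNPP => no_z; apply: not_cov; split => // z Sz le_xz le_zy.
  by apply: NNPP => /not_or_and[ne_zx ne_zy]; apply: no_z; exists z.
by exists [:: z, y & s]; split => //=; split => //; move/esym.
Qed.

Hypothesis rl_anti : forall x y, S x -> S y -> rl x y -> rl y x -> x = y.
Variables (bot top : A).
Hypotheses (Sbot : S bot) (Stop : S top).
Hypotheses (bot_le : forall z, S z -> rl bot z) (le_top : forall z, S z -> rl z top).

Lemma cover_chain_mem x s w : cover_chain x s -> S x -> S w -> rl x w -> rl w (last x s) ->
  (forall u, inseq u s -> rl u w \/ rl w u) -> inseq w (x :: s).
Proof.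
elim: s x => [|y s IH] x /= cs Sx Sw le_xw le_wl cmp.
  by left; exact: rl_anti le_wl le_xw.
case: cs => [[_ _ Sy btw] cs].
case: (cmp y (or_introl erefl)) => [le_yw|le_wy].
  by right; apply: IH => // u us; apply: cmp; right.
by case: (btw w Sw le_xw le_wy) => ->; [left | right; left].
Qed.

Lemma maximal_chain_head x s : maximal_chain S rl x s -> x = bot.
Proof.
case=> [[Sx cs] maxc]; apply: NNPP => ne_x.
have cb : is_chain S rl bot (x :: s) by split => //; split => //; [exact: bot_le | move/esym].
case: (maxc _ _ cb (fun z zs => or_intror zs) bot (or_introl erefl)) => [eb|bs]; first by case: ne_x.
exact: ne_x (rl_anti Sx Sbot (chain_head_le cs bs) (bot_le Sx)).
Qed.

Lemma maximal_chain_last x s : maximal_chain S rl x s -> last x s = top.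
Proof.
case=> [[Sx cs] maxc]; apply: NNPP => ne_l.
have Sl := chain_lastS Sx cs.
have ct : is_chain S rl x (rcons s top).
  by split => //; apply/chain_from_rcons; split => //; split => //; exact: le_top.
have sub z : inseq z (x :: s) -> inseq z (x :: rcons s top).
  by case=> [->|zs]; [left | right; rewrite -cats1; apply/inseq_cat; left].
have ts : inseq top (x :: rcons s top).
  by right; rewrite -cats1; apply/inseq_cat; right; left.
exact: ne_l (rl_anti Sl Stop (le_top Sl) (chain_le_last Sx cs (maxc _ _ ct sub top ts))).
Qed.

Lemma cover_chain_steps x s :
  (forall pre z s', s = pre ++ z :: s' -> covers (last x pre) z) -> cover_chain x s.
Proof.
elim: s x => //= y s IH x steps; split; first exact: steps [::] y s erefl.
by apply: IH => pre z s' E; exact: steps (y :: pre) z s' (congr1 (cons y) E).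
Qed.

(* An element w strictly between two consecutive elements could be inserted
   into the chain, but lies neither before nor after them. *)
Lemma maximal_chain_cover x s : maximal_chain S rl x s -> cover_chain x s.
Proof.
case=> [[Sx cs] maxc]; apply: cover_chain_steps => pre z s' E.
move: cs; rewrite E => /chain_from_cat[cpre /= [le_lz ne_lz Sz cs']].
have Sl := chain_lastS Sx cpre.
split => // w Sw le_lw le_wz.
case: (classic (w = last x pre)) => [->|ne_wl]; first by left.
case: (classic (w = z)) => [->|ne_wz]; first by right.
have cw : is_chain S rl x (pre ++ [:: w, z & s']).
  split => //; apply/chain_from_cat; split => //=.
  by split => //; move/esym.
have sub u : inseq u (x :: s) -> inseq u (x :: pre ++ [:: w, z & s']).
  rewrite E => -[->|/inseq_cat[up|/= [->|us']]]; first by left.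
  - by right; apply/inseq_cat; left.
  - by right; apply/inseq_cat; right; right; left.
  - by right; apply/inseq_cat; right; right; right.
have ws : inseq w (x :: pre ++ [:: w, z & s']) by right; apply/inseq_cat; right; left.
have not_pre : ~ inseq w (x :: pre).
  by move=> wp; apply: ne_wl; exact: rl_anti Sw Sl (chain_le_last Sx cpre wp) le_lw.
move: (maxc _ _ cw sub w ws); rewrite E => /= -[wx|/inseq_cat[wp|/= [//|ws']]].
- by case: not_pre; left.
- by case: not_pre; right.
- by case: ne_wz; exact: rl_anti Sw Sz le_wz (chain_head_le cs' ws').
Qed.

Lemma cover_chain_maximal s : cover_chain bot s -> last bot s = top ->
  maximal_chain S rl bot s.
Proof.
move=> cs ls; have chs := cover_chain_chain cs.
split=> [//|y t [Sy ct] sub w wt].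
have Sw : S w by case: wt => [->//|wt]; exact: chain_memS ct wt.
apply: cover_chain_mem => //; [exact: bot_le | by rewrite ls; exact: le_top |].
by move=> u us; exact: chain_comparable Sy ct (sub u (or_intror us)) wt.
Qed.

Lemma maximal_chainP x s :
  maximal_chain S rl x s <-> [/\ x = bot, last x s = top & cover_chain x s].
Proof.
split=> [m|[-> ls cs]]; last exact: cover_chain_maximal.
by split; [exact: maximal_chain_head m | exact: maximal_chain_last m | exact: maximal_chain_cover].
Qed.

Lemma has_length_cover_chain n : has_length S rl n ->
  exists s, [/\ cover_chain bot s, last bot s = top & size s = n].
Proof.
case=> [[x [s [[Sx cs] <-]]] bound].
have no_longer y t : is_chain S rl y t -> size t = (size s).+1 -> False.
  by move=> /bound + st; rewrite st ltnn.
have ls : last x s = top.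
  apply: NNPP => ne_l; apply: (no_longer x (rcons s top)); last by rewrite size_rcons.
  by split => //; apply/chain_from_rcons; split => //; split => //; exact/le_top/chain_lastS.
have ex : x = bot.
  apply: NNPP => ne_x; apply: (no_longer bot (x :: s)) => //.
  by split => //; split => //; [exact: bot_le | move/esym].
have sat : cover_chain x s.
  apply: NNPP => not_sat; have [s' [cs' ss' _]] := refine_chain cs not_sat.
  exact: no_longer x s' (conj Sx cs') ss'.
by exists s; rewrite -ex.
Qed.

End Chains.

Lemma cover_chain_convex A (S S' : A -> Prop) rl x s :
  (forall w, S' w -> S w) ->
  (forall u v w, S' u -> S' v -> S w -> rl u w -> rl w v -> S' w) ->
  S' x -> cover_chain S' rl x s -> cover_chain S rl x s.
Proof.
move=> sub convex; elim: s x => //= y s IH x S'x [[le_xy ne_xy S'y btw] cs].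
split; last exact: IH.
split => // [|w Sw le_xw le_wy]; first exact: sub.
by apply: btw => //; exact: convex S'x S'y Sw le_xw le_wy.
Qed.

Section Bier.
Variables (d : Order.disp_t) (T : tbPOrderType d) (J : T -> Prop).
Hypothesis J_proper : proper_ideal (@PT d T) (@PLe d T) J.
Local Notation PS := (@PT d T).
Local Notation PL := (@PLe d T).
Local Notation B := (BierS PS PL J).
Local Notation BL := (BierLe PS PL).
Local Notation bot := (@Order.bottom d T).
Local Notation top := (@Order.top d T).

Lemma ideal_le (u v : T) : (u <= v)%O -> J v -> J u.
Proof. by case: J_proper => _ [[_ down] _] le_uv; exact: down. Qed.

Lemma ideal_bot : J bot.
Proof. by case: J_proper => _ [_ [[z [_ Jz]] _]]; exact: ideal_le (le0x z) Jz. Qed.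

Lemma ideal_not_top : ~ J top.
Proof. by case: J_proper => _ [_ [_ [z [_ nJz]]]] Jt; apply/nJz/(ideal_le (lex1 z)). Qed.

Lemma PL_trans x y z : PL x y -> PL y z -> PL x z.
Proof. exact: le_trans. Qed.

Lemma PL_refl x : PS x -> PL x x.
Proof. by move=> _; exact: lexx. Qed.

Lemma PL_anti x y : PS x -> PS y -> PL x y -> PL y x -> x = y.
Proof. by rewrite /PLe => _ _ le_xy le_yx; apply/le_anti; rewrite le_xy le_yx. Qed.

Lemma P_maximal_chainP x s :
  maximal_chain PS PL x s <-> [/\ x = bot, last x s = top & cover_chain PS PL x s].
Proof.
apply: maximal_chainP => //; [exact: PL_trans | exact: PL_refl | exact: PL_anti | |].
- by move=> z _; exact: le0x.
- by move=> z _; exact: lex1.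
Qed.

Lemma BierLe_Some (S : T -> Prop) a b a' b' : S a -> S b -> (a <= b)%O ->
  BierLe S PL (Some (a', b')) (Some (a, b)) <-> (a' <= a)%O /\ (b <= b')%O.
Proof.
move=> Sa Sb le_ab /=; split => [sub | [le_a le_b] z [Sz le_az le_zb]].
  by have [_ ? _] := sub a (And3 Sa (lexx a) le_ab); have [_ _ ?] := sub b (And3 Sb le_ab (lexx b)).
by split => //; [exact: le_trans le_a le_az | exact: le_trans le_zb le_b].
Qed.

Lemma BierLeE a b a' b' : (a <= b)%O ->
  BL (Some (a', b')) (Some (a, b)) <-> (a' <= a)%O /\ (b <= b')%O.
Proof. exact: BierLe_Some. Qed.

Lemma Bier_mem x y : (x <= y)%O -> J x -> ~ J y -> B (Some (x, y)).
Proof. by []. Qed.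

Lemma BL_trans o1 o2 o3 : BL o1 o2 -> BL o2 o3 -> BL o1 o3.
Proof.
case: o1 o2 o3 => [[a1 b1]|] [[a2 b2]|] [[a3 b3]|] //=.
by move=> sub12 sub23 z /sub23/sub12.
Qed.

Lemma BL_refl o : B o -> BL o o.
Proof. by case: o => [[a b]|] //= _ z. Qed.

Lemma BL_anti o1 o2 : B o1 -> B o2 -> BL o1 o2 -> BL o2 o1 -> o1 = o2.
Proof.
case: o1 o2 => [[a1 b1]|] [[a2 b2]|] //= [_ _ le1 _ _] [_ _ le2 _ _].
move=> /(BierLeE _ _ le2)[le_a12 le_b21] /(BierLeE _ _ le1)[le_a21 le_b12].
by congr (Some (_, _)); apply/le_anti; rewrite ?le_a12 ?le_a21 ?le_b12 ?le_b21.
Qed.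

Lemma Bier_bot : B (Some (bot, top)).
Proof. exact: Bier_mem (le0x _) ideal_bot ideal_not_top. Qed.

Lemma Bier_bot_le o : B o -> BL (Some (bot, top)) o.
Proof. by case: o => [[a b] [_ _ le_ab _ _]|] //; apply/(BierLeE _ _ le_ab). Qed.

Lemma Bier_le_top o : B o -> BL o None.
Proof. by case: o => [[a b]|] //= _ z. Qed.

Lemma Bier_maximal_chainP x s : maximal_chain B BL x s <->
  [/\ x = Some (bot, top), last x s = None & cover_chain B BL x s].
Proof.
apply: maximal_chainP => //.
- exact: BL_trans.
- exact: BL_refl.
- exact: BL_anti.
- exact: Bier_bot.
- exact: Bier_bot_le.
- exact: Bier_le_top.
Qed.

Lemma Bier_chain_None s : chain_from B BL None s -> s = [::].
Proof. by case: s => // -[[a b]|] s []. Qed.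

Lemma cover_lower e e' y : covers PS PL e e' -> J e' -> (e' <= y)%O -> ~ J y ->
  covers B BL (Some (e, y)) (Some (e', y)).
Proof.
case=> le_ee' ne_ee' _ btw Je' le_e'y nJy; split => //.
- by apply/(BierLeE _ _ le_e'y); split.
- by case.
- case=> [[a b]|] //= [_ _ le_ab _ _] /(BierLeE _ _ le_ab)[le_ea le_yb].
  move=> /(BierLeE _ _ le_e'y)[le_ae' le_by]; have <- : b = y by apply/le_anti/andP.
  by case: (btw a Logic.I le_ea le_ae') => ->; [left | right].
Qed.

Lemma cover_upper x z y : covers PS PL z y -> J x -> (x <= z)%O -> ~ J z ->
  covers B BL (Some (x, y)) (Some (x, z)).
Proof.
case=> le_zy ne_zy _ btw Jx le_xz nJz; split => //.
- by apply/(BierLeE _ _ le_xz); split.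
- by case=> /esym.
- case=> [[a b]|] //= [_ _ le_ab _ _] /(BierLeE _ _ le_ab)[le_xa le_by].
  move=> /(BierLeE _ _ le_xz)[le_ax le_zb]; have <- : a = x by apply/le_anti/andP.
  by case: (btw b Logic.I le_zb le_by) => ->; [right | left].
Qed.

Lemma cover_top x y : covers PS PL x y -> J x -> ~ J y -> covers B BL (Some (x, y)) None.
Proof.
case=> le_xy ne_xy _ btw Jx nJy; split => //.
case=> [[a b] [_ _ le_ab Ja nJb]|]; last by right.
move=> /(BierLeE _ _ le_ab)[le_xa le_by] _; left.
have [-> | eq_ay] := btw a Logic.I le_xa (le_trans le_ab le_by); last by rewrite -eq_ay in nJy.
by have [eq_bx | -> //] := btw b Logic.I (le_trans le_xa le_ab) le_by; rewrite eq_bx in nJb.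
Qed.

Lemma Bier_cover_top a b : B (Some (a, b)) -> covers B BL (Some (a, b)) None ->
  covers PS PL a b.
Proof.
move=> [_ _ le_ab Ja nJb] [_ _ _ btw]; split => // [eq_ab | z _ le_az le_zb].
  by rewrite eq_ab in Ja.
case: (classic (J z)) => Jz.
  have le_ab_zb : BL (Some (a, b)) (Some (z, b)) by apply/(BierLeE _ _ le_zb); split.
  by case: (btw _ (Bier_mem le_zb Jz nJb) le_ab_zb Logic.I) => [[->]|//]; left.
have le_ab_az : BL (Some (a, b)) (Some (a, z)) by apply/(BierLeE _ _ le_az); split.
by case: (btw _ (Bier_mem le_az Ja Jz) le_ab_az Logic.I) => [[->]|//]; right.
Qed.

(* Some (c, b) lies between the two intervals, so one endpoint cannot move. *)
Lemma Bier_cover_Some a b c e : B (Some (a, b)) -> covers B BL (Some (a, b)) (Some (c, e)) ->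
  (a = c /\ covers PS PL e b) \/ (b = e /\ covers PS PL a c).
Proof.
move=> [_ _ le_ab Ja nJb] [le_ce_ab ne [_ _ le_ce Jc nJe] btw].
have [le_ac le_eb] := (BierLeE _ _ le_ce).1 le_ce_ab.
have le_cb := le_trans le_ce le_eb.
have [[eq_ca] | [eq_be]] : Some (c, b) = Some (a, b) \/ Some (c, b) = Some (c, e).
  apply: btw; first exact: Bier_mem le_cb Jc nJb.
  - by apply/(BierLeE _ _ le_cb).
  - by apply/(BierLeE _ _ le_ce).
- left; split => //; split => // [eq_eb | z _ le_ez le_zb].
    by apply: ne; rewrite eq_ca eq_eb.
  have le_az : (a <= z)%O by rewrite -eq_ca; exact: le_trans le_ce le_ez.
  have Baz : B (Some (a, z)) by split => // /(ideal_le le_ez).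
  have le1 : BL (Some (a, b)) (Some (a, z)) by apply/(BierLeE _ _ le_az); split.
  have le2 : BL (Some (a, z)) (Some (c, e)) by apply/(BierLeE _ _ le_ce); rewrite eq_ca.
  by case: (btw _ Baz le1 le2) => [[->]|[_ ->]]; [right | left].
- right; split => //; split => // [eq_ac | z _ le_az le_zc].
    by apply: ne; rewrite eq_ac -eq_be.
  have le_zb := le_trans le_zc le_cb.
  have Bzb : B (Some (z, b)) by split => //; exact: ideal_le le_zc Jc.
  have le1 : BL (Some (a, b)) (Some (z, b)) by apply/(BierLeE _ _ le_zb); split.
  have le2 : BL (Some (z, b)) (Some (c, e)) by apply/(BierLeE _ _ le_ce); rewrite eq_be.
  by case: (btw _ Bzb le1 le2) => [[->]|[->]]; [left | right].
Qed.

Lemma P_head_le_last x s : chain_from PS PL x s -> (x <= last x s)%O.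
Proof. by move=> cs; apply: (chain_le_last PL_trans PL_refl Logic.I cs); left. Qed.

Lemma lift_lower_chain y e0 es : ~ J y -> J (last e0 es) -> (last e0 es <= y)%O ->
  cover_chain PS PL e0 es -> cover_chain B BL (Some (e0, y)) [seq Some (e, y) | e <- es].
Proof.
elim: es e0 => [|e1 es IH] e0 //= nJy Jl le_ly [cov_e cs]; split; last exact: IH.
have le_e1l := P_head_le_last (cover_chain_chain cs).
by apply: cover_lower => //; [exact: ideal_le le_e1l Jl | exact: le_trans le_e1l le_ly].
Qed.

(* Lower endpoints climb along es first; then the upper endpoint descends
   along the reversal of y :: fs. *)
Lemma lift_cover_chains e0 es y fs : cover_chain PS PL e0 es -> cover_chain PS PL y fs ->
  J (last e0 es) -> ~ J y -> (last e0 es <= y)%O ->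
  exists t, [/\ cover_chain B BL (Some (e0, last y fs)) t, size t = size es + size fs &
                last (Some (e0, last y fs)) t = Some (last e0 es, y)].
Proof.
elim/last_ind: fs e0 es y => [|fs z IH] e0 es y ces cfs Jx nJy le_xy.
  exists [seq Some (e, y) | e <- es]; rewrite size_map addn0 (last_map (fun e => Some (e, y))).
  by split => //; exact: lift_lower_chain.
move/cover_chain_rcons: cfs => [cfs cov_z]; rewrite last_rcons.
set z0 := last y fs in cov_z *.
have le_yz0 : (y <= z0)%O := P_head_le_last (cover_chain_chain cfs).
have nJz0 : ~ J z0 by move=> /(ideal_le le_yz0).
have le_z0z : (z0 <= z)%O by case: cov_z.
have [t0 [ct0 st0 lt0]] := IH (last e0 es) [::] y Logic.I cfs Jx nJy le_xy.
exists ([seq Some (e, z) | e <- es] ++ Some (last e0 es, z0) :: t0); split.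
- apply/cover_chain_cat; split.
    apply: lift_lower_chain => //; last exact: le_trans le_xy (le_trans le_yz0 le_z0z).
    by move=> /(ideal_le le_z0z).
  rewrite (last_map (fun e => Some (e, z))); split => //.
  exact: cover_upper (le_trans le_xy le_yz0) nJz0.
- by rewrite size_cat size_map /= st0 size_rcons /=; lia.
- by rewrite last_cat (last_map (fun e => Some (e, z))) /= lt0.
Qed.

Lemma ideal_boundary x s : J x -> ~ J (last x s) ->
  exists es y fs, [/\ s = es ++ y :: fs, J (last x es) & ~ J y].
Proof.
elim: s x => [|c s IH] x /= Jx nJl; first by case: nJl.
case: (classic (J c)) => [Jc|nJc]; last by exists [::], c, s.
have [es [y [fs [-> Jl nJy]]]] := IH c Jc nJl.
by exists (c :: es), y, fs.
Qed.

Lemma Bier_cover_chain_of_P s : cover_chain PS PL bot s -> last bot s = top ->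
  exists t, [/\ cover_chain B BL (Some (bot, top)) t, last (Some (bot, top)) t = None &
                size t = size s].
Proof.
move=> cs ls.
have [es [y [fs [Es Jl nJy]]]] : exists es y fs, [/\ s = es ++ y :: fs, J (last bot es) & ~ J y].
  by apply: ideal_boundary; [exact: ideal_bot | rewrite ls; exact: ideal_not_top].
move: cs ls; rewrite Es => /cover_chain_cat[ces /= [cov_y cfs]].
rewrite last_cat /= => lfs.
have le_ly : (last bot es <= y)%O by case: cov_y.
have [t0 [ct0 st0 lt0]] := lift_cover_chains ces cfs Jl nJy le_ly.
rewrite lfs in ct0 lt0.
exists (rcons t0 None); rewrite last_rcons size_rcons st0 size_cat /=; split => //; last by lia.
by apply/cover_chain_rcons; split => //; rewrite lt0; exact: cover_top.
Qed.

(* c (ending at a) and c' (starting at b) record the endpoint moves made so far. *)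
Lemma P_cover_chain_of_Bier s a b c c' : B (Some (a, b)) ->
  cover_chain B BL (Some (a, b)) s -> last (Some (a, b)) s = None ->
  cover_chain PS PL bot c -> last bot c = a -> cover_chain PS PL b c' -> last b c' = top ->
  exists u, [/\ cover_chain PS PL bot u, last bot u = top & size u = size c + size c' + size s].
Proof.
elim: s a b c c' => [|o s IH] a b c c' //= Bab [cov_o cs] ls cc lc cc' lc'.
case: o cov_o cs ls => [[p q]|] cov_o cs ls.
  have Bpq : B (Some (p, q)) by case: cov_o.
  case: (Bier_cover_Some Bab cov_o) => [[eq_ap cov_qb]|[eq_bq cov_ap]].
  + have [u [cu lu su]] := IH p q c (b :: c') Bpq cs ls cc (etrans lc eq_ap) (conj cov_qb cc') lc'.
    by exists u; rewrite su /=; split => //; lia.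
  + have ccp : cover_chain PS PL bot (rcons c p) by apply/cover_chain_rcons; rewrite lc.
    rewrite eq_bq in cc' lc'.
    have [u [cu lu su]] := IH p q (rcons c p) c' Bpq cs ls ccp (last_rcons _ _ _) cc' lc'.
    by exists u; rewrite su size_rcons; split => //; lia.
rewrite (Bier_chain_None (cover_chain_chain cs)) /=.
exists (c ++ b :: c'); rewrite last_cat /= size_cat /=; split => //; last by lia.
by apply/cover_chain_cat; split => //=; rewrite lc; split => //; exact: Bier_cover_top.
Qed.

(* The lower endpoints along a chain of intervals increase weakly and the upper
   ones decrease weakly; every step moves at least one of them. *)
Lemma Bier_chain_unzip s a b a' b' p c c' :
  chain_from B BL (Some (a, b)) s -> last (Some (a, b)) s = Some (a', b') ->
  chain_from PS PL p c -> last p c = a -> chain_from PS PL b c' ->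
  exists e e', [/\ chain_from PS PL p e, last p e = a', chain_from PS PL b' e' &
                   size c + size c' + size s <= size e + size e'].
Proof.
elim: s a b c c' => [|o s IH] a b c c' /=.
  by move=> _ [<- <-] cc lc cc'; exists c, c'; rewrite addn0.
case: o => [[q r]|] [le_ab_qr ne Bqr cs] ls cc lc cc'; last first.
  by rewrite (Bier_chain_None cs) in ls.
have le_qr : (q <= r)%O by case: Bqr.
have [le_aq le_rb] := (BierLeE _ _ le_qr).1 le_ab_qr.
have le_lq : (last p c <= q)%O by rewrite lc.
have [c1 [cc1 lc1 sc1 sc1_lt]] := chain_extend_last cc Logic.I le_lq.
have [c2 [cc2 sc2 sc2_lt]] := chain_extend_head cc' Logic.I le_rb.
have [e [e' [ce le ce' se]]] := IH q r c1 c2 cs ls cc1 lc1 cc2.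
exists e, e'; split => //.
case: (classic (a = q)) => [eq_aq|ne_aq].
  have ne_rb : r <> b by move=> eq_rb; apply: ne; rewrite eq_aq eq_rb.
  by have := sc2_lt ne_rb; lia.
have ne_lq : last p c <> q by rewrite lc.
by have := sc1_lt ne_lq; lia.
Qed.

Lemma Bier_chain_bound n o s : has_length PS PL n -> is_chain B BL o s -> size s <= n.
Proof.
move=> [_ bound] [Bo cs].
case: o Bo cs => [[a b] Bab|_] cs; last by rewrite (Bier_chain_None cs).
have [s' [[a' b'] [cs' ls' ss']]] : exists s' ab, [/\ chain_from B BL (Some (a, b)) s',
    last (Some (a, b)) s' = Some ab & size s <= (size s').+1].
  case/lastP: s cs => [|s' [ab|]] cs; first by exists [::], (a, b).
    by exists (rcons s' (Some ab)), ab; rewrite last_rcons size_rcons.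
  move/chain_from_rcons: cs => [cs' [_ ne_l _]].
  case E: (last (Some (a, b)) s') ne_l => [ab|] // _.
  by exists s', ab; rewrite size_rcons.
have [e [e' [ce le ce' se]]] := Bier_chain_unzip cs' ls' (Logic.I : chain_from PS PL a [::])
  (erefl a) (Logic.I : chain_from PS PL b [::]).
have Bab' : B (Some (a', b')) by rewrite -ls'; exact: chain_lastS Bab cs'.
case: Bab' => _ _ le_ab' Ja' nJb'.
have cee' : chain_from PS PL a (e ++ b' :: e').
  by apply/chain_from_cat; split => //=; rewrite le; split => // eq_ab'; rewrite eq_ab' in Ja'.
have := bound a _ (conj Logic.I cee'); rewrite size_cat /=; lia.
Qed.

Lemma P_longest_cover_chain n : has_length PS PL n ->
  exists s, [/\ cover_chain PS PL bot s, last bot s = top & size s = n].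
Proof. by apply: has_length_cover_chain => // z _; [exact: le0x | exact: lex1]. Qed.

Lemma Bier_has_length n : has_length PS PL n -> has_length B BL n.
Proof.
move=> hn; split => [|o s]; last exact: Bier_chain_bound.
have [s [cs ls <-]] := P_longest_cover_chain hn.
have [t [ct lt st]] := Bier_cover_chain_of_P cs ls.
by exists (Some (bot, top)), t; rewrite st; split => //; split; [exact: Bier_bot | exact: cover_chain_chain].
Qed.

Lemma Bier_graded : graded B BL <-> graded PS PL.
Proof.
split => [[_ gB] | [_ gP]].
- split; first by split; [exists bot | exists top]; split => // z _; [exact: le0x | exact: lex1].
  move=> x s y t /P_maximal_chainP[-> ls cs] /P_maximal_chainP[-> lt ct].
  have [s1 [cs1 ls1 <-]] := Bier_cover_chain_of_P cs ls.
  have [t1 [ct1 lt1 <-]] := Bier_cover_chain_of_P ct lt.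
  by apply: gB; apply/Bier_maximal_chainP.
- split.
    split; [exists (Some (bot, top)) | exists None]; split => //.
    + exact: Bier_bot.
    + exact: Bier_bot_le.
    + exact: Bier_le_top.
  move=> x s y t /Bier_maximal_chainP[-> ls cs] /Bier_maximal_chainP[-> lt ct].
  have [u [cu lu su]] := @P_cover_chain_of_Bier s bot top [::] [::] Bier_bot cs ls Logic.I erefl Logic.I erefl.
  have [v [cv lv sv]] := @P_cover_chain_of_Bier t bot top [::] [::] Bier_bot ct lt Logic.I erefl Logic.I erefl.
  rewrite /= !add0n in su sv; rewrite -su -sv; apply: gP; exact/P_maximal_chainP.
Qed.

Lemma P_rank_cover_chain z r : rank_is PS PL z r ->
  exists g, [/\ cover_chain PS PL bot g, last bot g = z & size g = r].
Proof.
move=> rz.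
have [g [cg lg sg]] := @has_length_cover_chain _ (fun w => PS w /\ PL w z) PL bot z
  (conj Logic.I (le0x z)) (conj Logic.I (lexx z)) (fun w _ => le0x w) (fun w Sw => Sw.2) r rz.
exists g; split => //; apply: cover_chain_convex cg => // [u v w _ [_ le_vz] _ _ le_wv|].
  by split => //; exact: le_trans le_wv le_vz.
by split => //; exact: le0x.
Qed.

Lemma P_corank_cover_chain n y ry : graded PS PL -> has_length PS PL n -> rank_is PS PL y ry ->
  exists f, [/\ cover_chain PS PL y f, last y f = top & ry + size f = n].
Proof.
move=> [_ gP] hn ry_y.
have [g [cg lg sg]] := P_rank_cover_chain ry_y.
have fl_up : finite_length (fun w => PS w /\ PL y w) PL.
  have [_ bound] := hn; exists n => x s [_ cs].
  by apply: (bound x s); split => //; exact: chain_from_sub cs (fun _ _ => Logic.I).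
have [m hm] := finite_length_has_length fl_up (conj Logic.I (lexx y)).
have [f [cf lf _]] := @has_length_cover_chain _ (fun w => PS w /\ PL y w) PL y top
  (conj Logic.I (lexx y)) (conj Logic.I (lex1 y)) (fun w Sw => Sw.2) (fun w _ => lex1 w) m hm.
have {}cf : cover_chain PS PL y f.
  apply: cover_chain_convex cf => // [u v w [_ le_yu] _ _ le_uw _|].
    by split => //; exact: le_trans le_yu le_uw.
  by split => //; exact: lexx.
have [s [cs ls <-]] := P_longest_cover_chain hn.
exists f; split => //; rewrite -sg -size_cat; apply: gP; apply/P_maximal_chainP => //.
  by split => //; [rewrite last_cat lg | apply/cover_chain_cat; rewrite lg].
Qed.

Lemma Bier_rank_chain n x y rx ry : has_length PS PL n -> graded PS PL ->
  B (Some (x, y)) -> rank_is PS PL x rx -> rank_is PS PL y ry ->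
  exists o s, is_chain (fun w => B w /\ BL w (Some (x, y))) BL o s /\ size s = rx + (n - ry).
Proof.
move=> hn gP [_ _ le_xy Jx nJy] rx_x ry_y.
have [f [cf lf sf]] := P_corank_cover_chain gP hn ry_y.
have [h [ch lh sh]] := P_rank_cover_chain rx_x.
have Jl : J (last bot h) by rewrite lh.
have le_ly : (last bot h <= y)%O by rewrite lh.
have [t [ct st lt]] := lift_cover_chains ch cf Jl nJy le_ly.
rewrite lh lf in ct lt; have cht := cover_chain_chain ct.
have le_last w : inseq w (Some (bot, top) :: t) -> BL w (Some (x, y)).
  by rewrite -lt; apply: (chain_le_last BL_trans BL_refl Bier_bot cht).
exists (Some (bot, top)), t; split; last by rewrite st sh; lia.
split; first by split; [exact: Bier_bot | apply: le_last; left].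
apply: (chain_from_sub cht) => w wt.
by split; [exact: chain_memS cht wt | apply: le_last; right].
Qed.

Lemma Bier_rank_bound n x y rx ry o s : has_length PS PL n -> (x <= y)%O ->
  rank_is PS PL x rx -> rank_is PS PL y ry ->
  is_chain (fun w => B w /\ BL w (Some (x, y))) BL o s -> size s <= rx + (n - ry).
Proof.
move=> [_ bound] le_xy [_ bound_x] ry_y [[Bo le_o] cs].
case: o Bo le_o cs => [[a b] Bab|_ //] le_o cs.
have cs' : chain_from B BL (Some (a, b)) s.
  by apply: (chain_from_sub cs) => w ws; case: (chain_memS cs ws).
have [Bl le_l] := chain_lastS (conj Bab le_o) cs.
case E: (last (Some (a, b)) s) Bl le_l => [[a' b']|//] [_ _ le_ab' _ _] le_l.
have [le_a'x le_yb'] := (BierLeE _ _ le_xy).1 le_l.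
have [e [e' [ce le ce' se]]] := Bier_chain_unzip cs' E (Logic.I : chain_from PS PL a [::])
  (erefl a) (Logic.I : chain_from PS PL b [::]).
have se_rx : size e <= rx.
  apply: (bound_x a e); split => /=.
    by split => //; apply: le_trans le_a'x; rewrite -le; exact: P_head_le_last ce.
  apply: (chain_from_sub ce) => w we; split => //; apply: le_trans le_a'x; rewrite -le.
  by apply: (chain_le_last PL_trans PL_refl Logic.I ce); right.
have [g [cg lg sg]] := P_rank_cover_chain ry_y.
have [f [cf sf _]] := chain_extend_head ce' Logic.I le_yb'.
have cgf : chain_from PS PL bot (g ++ f).
  by apply/chain_from_cat; rewrite lg; split => //; exact: cover_chain_chain.
have := bound bot _ (conj Logic.I cgf).
by rewrite size_cat sg /= in se *; lia.
Qed.

Lemma Bier_rank n x y rx ry : has_length PS PL n -> graded PS PL -> B (Some (x, y)) ->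
  rank_is PS PL x rx -> rank_is PS PL y ry -> rank_is B BL (Some (x, y)) (rx + (n - ry)).
Proof.
move=> hn gP Bxy rx_x ry_y; split; first exact: Bier_rank_chain.
by case: Bxy => _ _ le_xy _ _ o s; exact: Bier_rank_bound.
Qed.

Lemma Bier_upper_interval_iso x y : B (Some (x, y)) ->
  poset_iso (itv B BL (Some (x, y)) None) BL
    (BierS (itv PS PL x y) PL (fun z => J z /\ itv PS PL x y z))
    (BierLe (itv PS PL x y) PL).
Proof.
case=> _ _ le_xy Jx nJy.
have sub_itv a b : (a <= b)%O -> BL (Some (x, y)) (Some (a, b)) ->
    itv PS PL x y a /\ itv PS PL x y b.
  move=> le_ab /(BierLeE _ _ le_ab)[le_xa le_by].
  by split; split => //; [exact: le_trans le_ab le_by | exact: le_trans le_xa le_ab].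
exists id, id; split => //.
- case=> [[a b] [[_ _ le_ab Ja nJb] le_o _]|] //=.
  by have [Ia Ib] := sub_itv a b le_ab le_o; split => // -[].
- case=> [[a b] [[_ le_xa le_ay] [_ le_xb le_by] le_ab [Ja _] nJb]|] //.
  split => //; first by split => // Jb; apply: nJb.
  by apply/(BierLeE _ _ le_ab); split.
- move=> o1 o2 _ [Bo2 le_o2 _].
  case: o2 Bo2 le_o2 => [[a2 b2] [_ _ le_ab2 _ _] le_o2|]; last by case: o1 => [[]|].
  case: o1 => [[a1 b1]|] //.
  have [Ia2 Ib2] := sub_itv a2 b2 le_ab2 le_o2.
  by rewrite (BierLeE _ _ le_ab2) (BierLe_Some _ _ Ia2 Ib2 le_ab2).
Qed.

Lemma Bier_interval_iso x' y' x y : B (Some (x', y')) -> B (Some (x, y)) ->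
  BL (Some (x', y')) (Some (x, y)) ->
  poset_iso (itv B BL (Some (x', y')) (Some (x, y))) BL (prodS x' x y y') (@prodOpLe d T).
Proof.
case=> _ _ le_xy' Jx' nJy'; case=> _ _ le_xy Jx nJy _.
exists (fun o => if o is Some p then p else (x, y)), (fun p => Some p); split.
- case=> [[a b] [[_ _ le_ab _ _] le_o le_o']|[_ _ //]] /=.
  have [le_x'a le_by'] := (BierLeE _ _ le_ab).1 le_o.
  have [le_ax le_yb] := (BierLeE _ _ le_xy).1 le_o'.
  by split; split.
- move=> [a b] [[_ le_x'a le_ax] [_ le_yb le_by']] /=.
  have le_ab : (a <= b)%O by apply: le_trans le_ax (le_trans le_xy le_yb).
  split.
  + by split => //; [exact: ideal_le le_ax Jx | move=> /(ideal_le le_yb)].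
  + by apply/(BierLeE _ _ le_ab); split.
  + by apply/(BierLeE _ _ le_xy); split.
- by case=> [[a b]|] [_ _ le_o'].
- by case.
- move=> o1 o2 [_ _ le1] [Bo2 _ le2].
  case: o1 o2 le1 Bo2 le2 => [[a1 b1]|] // [[a2 b2]|] // _ [_ _ le_ab2 _ _] _.
  exact: BierLeE.
Qed.

Section BierLattice.
Hypothesis P_lattice : is_lattice PS PL.
Variables (a1 b1 a2 b2 : T).
Hypotheses (B1 : B (Some (a1, b1))) (B2 : B (Some (a2, b2))).

(* The join is the intersection [a1 `|` a2, b1 `&` b2] when it is an element, else the top. *)
Lemma Bier_join : exists j, is_lub B BL (Some (a1, b1)) (Some (a2, b2)) j.
Proof.
have [[j [_ le_a1j le_a2j lub_j]] _] := @P_lattice a1 a2 Logic.I Logic.I.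
have [_ [m [_ le_mb1 le_mb2 glb_m]]] := @P_lattice b1 b2 Logic.I Logic.I.
have le_upper c e : B (Some (c, e)) -> BL (Some (a1, b1)) (Some (c, e)) ->
    BL (Some (a2, b2)) (Some (c, e)) -> (j <= c)%O /\ (e <= m)%O.
  move=> [_ _ le_ce _ _] /(BierLeE _ _ le_ce)[le1 le1'] /(BierLeE _ _ le_ce)[le2 le2'].
  by split; [exact: lub_j | exact: glb_m].
case: (classic [/\ J j, ~ J m & (j <= m)%O]) => [[Jj nJm le_jm]|no_int].
  exists (Some (j, m)); split => //.
  - by apply/(BierLeE _ _ le_jm).
  - by apply/(BierLeE _ _ le_jm).
  - case=> [[c e]|] // Bce le1 le2; have [le_jc le_em] := le_upper c e Bce le1 le2.
    by case: Bce => _ _ le_ce _ _; apply/(BierLeE _ _ le_ce).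
exists None; split => // -[[c e]|] // Bce le1 le2; case: no_int.
have [le_jc le_em] := le_upper c e Bce le1 le2; case: Bce => _ _ le_ce Jc nJe.
split; [exact: ideal_le le_jc Jc | by move=> /(ideal_le le_em) | exact: le_trans le_jc (le_trans le_ce le_em)].
Qed.

Lemma Bier_meet : exists m, is_glb B BL (Some (a1, b1)) (Some (a2, b2)) m.
Proof.
have [_ [m [_ le_ma1 le_ma2 glb_m]]] := @P_lattice a1 a2 Logic.I Logic.I.
have [[j [_ le_b1j le_b2j lub_j]] _] := @P_lattice b1 b2 Logic.I Logic.I.
case: B1 B2 => [_ _ le_ab1 Ja1 nJb1] [_ _ le_ab2 _ _].
have le_mj : (m <= j)%O by apply: le_trans le_ma1 (le_trans le_ab1 le_b1j).
exists (Some (m, j)); split.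
- by split => //; [exact: ideal_le le_ma1 Ja1 | move=> /(ideal_le le_b1j)].
- by apply/(BierLeE _ _ le_ab1).
- by apply/(BierLeE _ _ le_ab2).
- case=> [[c e]|] // _ /(BierLeE _ _ le_ab1)[le_ca1 le_b1e] /(BierLeE _ _ le_ab2)[le_ca2 le_b2e].
  by apply/(BierLeE _ _ le_mj); split; [exact: glb_m | exact: lub_j].
Qed.

End BierLattice.

Lemma Bier_lattice : is_lattice PS PL -> is_lattice B BL.
Proof.
move=> latP [[a1 b1]|] [[a2 b2]|] B1 B2.
- by split; [exact: Bier_join | exact: Bier_meet].
- by split; [exists None | exists (Some (a1, b1))]; split.
- by split; [exists None | exists (Some (a2, b2))]; split.
- by split; exists None; split.
Qed.

End Bier.

Theorem lemma1 (d : Order.disp_t) (T : tbPOrderType d) (I : T -> Prop) :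
  finite_length (@PT d T) (@PLe d T) ->
  proper_ideal (@PT d T) (@PLe d T) I ->
  (exists n, has_length (@PT d T) (@PLe d T) n /\
             has_length (BierS (@PT d T) (@PLe d T) I) (BierLe (@PT d T) (@PLe d T)) n) /\
  (graded (BierS (@PT d T) (@PLe d T) I) (BierLe (@PT d T) (@PLe d T)) <->
   graded (@PT d T) (@PLe d T)) /\
  (forall n, has_length (@PT d T) (@PLe d T) n -> graded (@PT d T) (@PLe d T) ->
   forall x y : T, BierS (@PT d T) (@PLe d T) I (Some (x, y)) ->
   forall rx ry, rank_is (@PT d T) (@PLe d T) x rx -> rank_is (@PT d T) (@PLe d T) y ry ->
   rank_is (BierS (@PT d T) (@PLe d T) I) (BierLe (@PT d T) (@PLe d T))
           (Some (x, y)) (rx + (n - ry))) /\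
  (forall x y : T, BierS (@PT d T) (@PLe d T) I (Some (x, y)) ->
   poset_iso
     (itv (BierS (@PT d T) (@PLe d T) I) (BierLe (@PT d T) (@PLe d T)) (Some (x, y)) None)
     (BierLe (@PT d T) (@PLe d T))
     (BierS (itv (@PT d T) (@PLe d T) x y) (@PLe d T)
            (fun z => I z /\ itv (@PT d T) (@PLe d T) x y z))
     (BierLe (itv (@PT d T) (@PLe d T) x y) (@PLe d T))) /\
  (forall x' y' x y : T,
   BierS (@PT d T) (@PLe d T) I (Some (x', y')) ->
   BierS (@PT d T) (@PLe d T) I (Some (x, y)) ->
   BierLe (@PT d T) (@PLe d T) (Some (x', y')) (Some (x, y)) ->
   poset_iso
     (itv (BierS (@PT d T) (@PLe d T) I) (BierLe (@PT d T) (@PLe d T))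
          (Some (x', y')) (Some (x, y)))
     (BierLe (@PT d T) (@PLe d T))
     (prodS x' x y y') (@prodOpLe d T)) /\
  (is_lattice (@PT d T) (@PLe d T) ->
   is_lattice (BierS (@PT d T) (@PLe d T) I) (BierLe (@PT d T) (@PLe d T))).
Proof.
move=> finP I_proper.
have [n hn] := finite_length_has_length finP (Logic.I : PT (@Order.bottom d T)).
split; first by exists n; split => //; exact: Bier_has_length.
split; first exact: Bier_graded.
split; first by move=> m hm gP x y Bxy rx ry; exact: Bier_rank.
split; first by move=> x y; exact: Bier_upper_interval_iso.
split; first by move=> x' y' x y; exact: Bier_interval_iso.
exact: Bier_lattice.
Qed.
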